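(* If $L\subseteq\Sigma^*$ is a Boolean combination of bounded languages, then $L\in\mathcal{L}(\mathsf{FC})$ if and only if $L\in\mathcal{L}(\mathsf{FC}[\mathsf{REG}])$.
   Context: $\Sigma$ is a fixed finite alphabet. For $w \in \Sigma^*$, $\mathsf{Facs}(w)$ is the set of all factors of $w$. The structure $\mathfrak{A}_w$ representing $w$ has universe $\mathsf{Facs}(w)\cup\{\perp\}$, a ternary relation $R_\circ=\{(x,y,z)\in\mathsf{Facs}(w)^3 : x=y\cdot z\}$, for each letter a constant interpreted as that letter if it occurs in $w$ and as $\perp$ otherwise, and a constant $\varepsilon$ interpreted as the empty word. $\mathsf{FC}$ is first-order logic over such structures, with atomic formulas $(x \mathbin{\dot=} y\cdot z)$ (meaning $R_\circ(x,y,z)$) where $x,y,z$ are variables, letters of $\Sigma$, or $\varepsilon$, closed under $\land,\lor,\neg,\exists,\forall$; quantified variables range over $\mathsf{Facs}(w)$. $\mathsf{FC}[\mathsf{REG}]$ extends $\mathsf{FC}$ with atomic regular constraints $(x \mathbin{\dot\in}\gamma)$, $\gamma$ a regular expression, which hold under an assignment $\sigma$ in $\mathfrak{A}_w$ iff $\sigma(x)$ is a factor of $w$ and $\sigma(x)\in\mathcal{L}(\gamma)$. For a sentence $\varphi$, $\mathcal{L}(\varphi)=\{w\in\Sigma^*:\mathfrak{A}_w\models\varphi\}$; $\mathcal{L}(\mathsf{FC})$ and $\mathcal{L}(\mathsf{FC}[\mathsf{REG}])$ are the classes of languages defined by sentences of the respective logics. A language $L\subseteq\Sigma^*$ is bounded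 if $L\subseteq w_1^*w_2^*\cdots w_n^*$ for some $n\in\mathbb{N}$ and $w_1,\dots,w_n\in\Sigma^*$. *)

From mathcomp Require Import all_boot.
Set Implicit Arguments. Unset Strict Implicit. Unset Printing Implicit Defensive.

Section FC.
Variable Sigma : finType.

Definition word := seq Sigma.
Definition language := word -> Prop.

Inductive regex : Type :=
| RE_empty : regex
| RE_eps : regex
| RE_char : Sigma -> regex
| RE_union : regex -> regex -> regex
| RE_cat : regex -> regex -> regex
| RE_star : regex -> regex.

Inductive re_lang : regex -> word -> Prop :=
| rl_eps : re_lang RE_eps [::]
| rl_char a : re_lang (RE_char a) [:: a]
| rl_unionl r s w : re_lang r w -> re_lang (RE_union r s) w
| rl_unionr r s w : re_lang s w -> re_lang (RE_union r s) w
| rl_cat r s u v : re_lang r u -> re_lang s v -> re_lang (RE_cat r s) (u ++ v)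
| rl_star0 r : re_lang (RE_star r) [::]
| rl_starS r u v : re_lang r u -> re_lang (RE_star r) v -> re_lang (RE_star r) (u ++ v).

Inductive term : Type :=
| TVar : nat -> term
| TLet : Sigma -> term
| TEps : term.

Inductive formula : Type :=
| FEq : term -> term -> term -> formula
| FReg : nat -> regex -> formula
| FNot : formula -> formula
| FAnd : formula -> formula -> formula
| FOr : formula -> formula -> formula
| FEx : nat -> formula -> formula
| FAll : nat -> formula -> formula.

Fixpoint is_FC (phi : formula) : bool :=
  match phi with
  | FEq _ _ _ => true
  | FReg _ _ => false
  | FNot p => is_FC p
  | FAnd p q | FOr p q => is_FC p && is_FC q
  | FEx _ p | FAll _ p => is_FC p
  end.

Definition term_fv (t : term) : seq nat :=
  if t is TVar n then [:: n] else [::].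

Fixpoint fv (phi : formula) : seq nat :=
  match phi with
  | FEq x y z => term_fv x ++ term_fv y ++ term_fv z
  | FReg x _ => [:: x]
  | FNot p => fv p
  | FAnd p q | FOr p q => fv p ++ fv q
  | FEx n p | FAll n p => filter (fun m => m != n) (fv p)
  end.

Definition sentence (phi : formula) : Prop := fv phi = [::].

Definition is_factor (w u : word) : bool := infix u w.

(* interpretation of a term in A_w under sigma; None stands for \perp *)
Definition term_eval (w : word) (sigma : nat -> word) (t : term) : option word :=
  match t with
  | TVar n => Some (sigma n)
  | TLet a => if a \in w then Some [:: a] else None
  | TEps => Some [::]
  end.

Definition upd (sigma : nat -> word) (n : nat) (u : word) : nat -> word :=
  fun m => if m == n then u else sigma m.

Fixpoint sat (w : word) (sigma : nat -> word) (phi : formula) : Prop :=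
  match phi with
  | FEq x y z =>
      exists X Y Z, [/\ term_eval w sigma x = Some X,
                        term_eval w sigma y = Some Y,
                        term_eval w sigma z = Some Z &
                        [/\ is_factor w X, is_factor w Y, is_factor w Z &
                            X = Y ++ Z]]
  | FReg x g => is_factor w (sigma x) /\ re_lang g (sigma x)
  | FNot p => ~ sat w sigma p
  | FAnd p q => sat w sigma p /\ sat w sigma q
  | FOr p q => sat w sigma p \/ sat w sigma q
  | FEx n p => exists u, is_factor w u /\ sat w (upd sigma n u) p
  | FAll n p => forall u, is_factor w u -> sat w (upd sigma n u) p
  end.

(* For a sentence the assignment is irrelevant; we use the assignment
   sending every variable to the empty word (a factor of every w). *)
Definition models (w : word) (phi : formula) : Prop := sat w (fun _ => [::]) phi.

Definition FC_definable (L : language) : Prop :=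
  exists phi, [/\ sentence phi, is_FC phi & forall w, L w <-> models w phi].

Definition FCREG_definable (L : language) : Prop :=
  exists phi, sentence phi /\ forall w, L w <-> models w phi.

Fixpoint in_star_prod (ws : seq word) (w : word) : Prop :=
  match ws with
  | [::] => w = [::]
  | wi :: ws' => exists k v, w = flatten (nseq k wi) ++ v /\ in_star_prod ws' v
  end.

Definition bounded (L : language) : Prop :=
  exists ws : seq word, forall w, L w -> in_star_prod ws w.

Inductive bool_comb_bounded : language -> Prop :=
| bcb_base L : bounded L -> bool_comb_bounded L
| bcb_compl L : bool_comb_bounded L -> bool_comb_bounded (fun w => ~ L w)
| bcb_union L1 L2 : bool_comb_bounded L1 -> bool_comb_bounded L2 ->
    bool_comb_bounded (fun w => L1 w \/ L2 w)
| bcb_inter L1 L2 : bool_comb_bounded L1 -> bool_comb_bounded L2 ->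
    bool_comb_bounded (fun w => L1 w /\ L2 w).

End FC.

From mathcomp Require Import all_boot zify.
From mathcomp Require Import boolp.
From Stdlib Require Import Classical.
Set Implicit Arguments. Unset Strict Implicit. Unset Printing Implicit Defensive.

(* One inclusion is trivial, since every FC sentence is an FC[REG] sentence.
   For the other, a Boolean combination of bounded languages is either bounded
   or co-bounded, and both logics are closed under complement, so it suffices
   to turn an FC[REG] sentence defining a bounded language L into an FC one.
   Replacing every w_i by its primitive root, L ⊆ p_1^* ... p_n^* with all p_i
   primitive.  The FC sentence is "w ∈ p_1^* ... p_n^*" conjoined with a
   translation of the original sentence in which every regular constraint
   (x ∈ γ) is replaced by an FC formula that agrees with it on such words:
   - every factor of such a word is s · p_1^{k_1} ... p_n^{k_n} · t with s, t
     factors of the p_i (star_prod_factor);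
   - γ is recognized by a morphism into a finite monoid (regex_recognizer), under
     which k |-> p^k is eventually periodic (recognizer_periodic), so membership
     in γ only depends on s, t and the classes of the k_i modulo threshold and
     period; these finitely many "shapes" are each FC-definable, because p^*
     is FC-definable for primitive p (sat_FPrimStar). *)

Section BoundedFC.
Variable Sigma : finType.
Local Notation word := (word Sigma).
Local Notation regex := (regex Sigma).
Local Notation formula := (formula Sigma).
Local Notation re_lang := (@re_lang Sigma).

Definition wpow (p : word) (k : nat) : word := flatten (nseq k p).

Lemma wpowS p k : wpow p k.+1 = p ++ wpow p k. Proof. by []. Qed.

Lemma wpowD p a b : wpow p (a + b) = wpow p a ++ wpow p b.
Proof. by elim: a => //= a IH; rewrite addSn !wpowS IH catA. Qed.

Lemma wpowSr p k : wpow p k.+1 = wpow p k ++ p.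
Proof. by rewrite -addn1 wpowD /wpow /= cats0. Qed.

Lemma wpowM p a b : wpow (wpow p a) b = wpow p (a * b).
Proof. by elim: b => [|b IH]; rewrite ?muln0 // wpowS IH mulnS wpowD. Qed.

Lemma size_wpow p k : size (wpow p k) = k * size p.
Proof. by elim: k => //= k IH; rewrite wpowS size_cat IH mulSn. Qed.

Lemma wpow1 p : wpow p 1 = p. Proof. by rewrite /wpow /= cats0. Qed.

Lemma wpow_nil k : wpow [::] k = [::]. Proof. by elim: k. Qed.

Lemma cat_eq_cat (x y u v : word) : x ++ y = u ++ v ->
  (exists m, u = x ++ m /\ y = m ++ v) \/ (exists m, x = u ++ m /\ v = m ++ y).
Proof.
elim: x u => [|a x IH] [|b u] /=.
- by move=> ->; left; exists [::].
- by move=> ->; left; exists (b :: u).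
- by move=> <-; right; exists (a :: x).
- by case=> -> /IH [[m [-> ->]]|[m [-> ->]]]; [left|right]; exists m.
Qed.

Lemma cat3_eq_cat (a b c x y : word) : a ++ b ++ c = x ++ y ->
  (exists c1, x = a ++ b ++ c1 /\ c = c1 ++ y) \/
  (exists a2, a = x ++ a2 /\ y = a2 ++ b ++ c) \/
  (exists b1 b2, [/\ x = a ++ b1, b = b1 ++ b2 & y = b2 ++ c]).
Proof.
rewrite catA => /cat_eq_cat [[m [-> ->]]|[m [E ->]]].
  by left; exists m; rewrite catA.
move/esym: E => /cat_eq_cat [[m' [-> ->]]|[m' [-> ->]]].
  by right; left; exists m'; rewrite catA.
by right; right; exists m', m.
Qed.

Lemma infix_cat (u v w : word) : infix (u ++ v) w -> infix u w /\ infix v w.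
Proof. by move=> h; split; [exact: catr_infix h|exact: catl_infix h]. Qed.

Lemma commute_common_root (x y : word) : x ++ y = y ++ x ->
  exists t i j, x = wpow t i /\ y = wpow t j.
Proof.
move: {2}(size x + size y) (leqnn (size x + size y)) => n.
elim: n x y => [|n IH] x y hs E.
  move: hs; rewrite leqn0 addn_eq0 !size_eq0 => /andP[/eqP-> /eqP->].
  by exists [::], 0, 0.
case: x hs E => [|a x'] hs E; first by exists y, 0, 1; rewrite wpow1.
case: y hs E => [|b y'] hs E; first by exists (a :: x'), 1, 0; rewrite wpow1.
case/cat_eq_cat: (E) => [[m [E1 E2]]|[m [E1 E2]]].
- have Em : (a :: x') ++ m = m ++ (a :: x') by rewrite -E1.
  have [|t [i [j [Ex Emm]]]] := IH _ _ _ Em; first by move: hs; rewrite E1 size_cat /=; lia.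
  by exists t, i, (i + j); rewrite E1 Ex Emm wpowD.
- have Em : m ++ (b :: y') = (b :: y') ++ m by rewrite -E2.
  have [|t [i [j [Emm Ey]]]] := IH _ _ _ Em; first by move: hs; rewrite E1 size_cat /=; lia.
  by exists t, (j + i), j; rewrite E1 Ey Emm wpowD.
Qed.

Definition primitive (p : word) := p <> [::] /\ forall q k, wpow q k = p -> k = 1.

(* The words commuting with a primitive word p are exactly the powers of p;
   this is what makes p^* definable in FC. *)
Lemma primitive_commute (p z : word) : primitive p -> p ++ z = z ++ p ->
  exists j, z = wpow p j.
Proof.
move=> [_ hprim] /commute_common_root [t [i [j [Ep ->]]]].
have hi := hprim t i (esym Ep).
by move: Ep; rewrite hi wpow1 => ->; exists j.
Qed.

Lemma primitive_root (v : word) : v <> [::] -> exists q j, primitive q /\ v = wpow q j.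
Proof.
move: {2}(size v) (leqnn (size v)) => n.
elim: n v => [|n IH] v hs hv; first by case: v hs hv.
have [hp|hp] := classic (primitive v); first by exists v, 1; rewrite wpow1.
have [q [k [hE hk]]] : exists q k, wpow q k = v /\ k <> 1.
  apply: NNPP => hn; apply: hp; split => // q k E; apply: NNPP => hk.
  by apply: hn; exists q, k.
have hq : q <> [::] by move=> hq; apply: hv; rewrite -hE hq wpow_nil.
have hk0 : k <> 0 by move=> hk0; apply: hv; rewrite -hE hk0.
have [|q' [j [hq' Eq]]] := IH q _ hq; last by exists q', (j * k); rewrite -hE Eq wpowM.
have : 0 < size q by case: q hq {hE}.
by move: hs; rewrite -hE size_wpow; nia.
Qed.

Fixpoint blocks (ps : seq word) (ks : seq nat) : word :=
  match ps, ks with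
  | p :: ps', k :: ks' => wpow p k ++ blocks ps' ks'
  | _, _ => [::]
  end.

Lemma blocks_zero ps : blocks ps (nseq (size ps) 0) = [::].
Proof. by elim: ps. Qed.

(* The words that can occur as the ragged ends s, t of a factor
   s p_1^{k_1} ... p_n^{k_n} t: the empty word and factors of some p_i. *)
Definition short_factor (ps : seq word) (s : word) :=
  s = [::] \/ exists p a b, p \in ps /\ p = a ++ s ++ b.

Lemma short_factor_cons p ps s : short_factor ps s -> short_factor (p :: ps) s.
Proof.
case=> [->|[q [a [b [hq E]]]]]; [by left|right].
by exists q, a, b; rewrite in_cons hq orbT.
Qed.

Lemma short_factor_head p ps a s b : p = a ++ s ++ b -> short_factor (p :: ps) s.
Proof. by move=> E; right; exists p, a, b; rewrite mem_head. Qed.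

Lemma wpow_prefix (p : word) k (u b : word) : wpow p k = u ++ b ->
  exists j t c, u = wpow p j ++ t /\ p = t ++ c.
Proof.
elim: k u => [|k IH] u /=; first by case: u => // /esym _; exists 0, [::], p.
rewrite wpowS => /cat_eq_cat [[m [-> /IH [j [t [c [-> Ep]]]]]]|[m [E _]]].
  by exists j.+1, t, c; rewrite wpowS catA.
by exists 0, u, m.
Qed.

Lemma wpow_suffix (p : word) k (a u : word) : wpow p k = a ++ u ->
  exists j s d, u = s ++ wpow p j /\ p = d ++ s.
Proof.
elim: k a u => [|k IH] a u /=.
  by case: u => [|x u]; [exists 0, [::], p; rewrite cats0|case: a].
rewrite wpowSr => /esym /cat_eq_cat [[m [/IH [j [s [d [-> Ep]]]] ->]]|[m [E1 E2]]].
  by exists j.+1, s, d; rewrite wpowSr -catA.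
by exists 0, u, m; rewrite cats0.
Qed.

Lemma wpow_infix (p : word) k (a u b : word) : wpow p k = a ++ u ++ b ->
  exists j s t, [/\ u = s ++ wpow p j ++ t, short_factor [:: p] s & short_factor [:: p] t].
Proof.
elim: k a u b => [|k IH] a u b /=.
  by case: a => //; case: u => // _; exists 0, [::], [::]; split => //; left.
rewrite wpowS => /esym /cat_eq_cat [[m [Ep E]]|[m [Ea E]]]; last exact: IH E.
move/esym: E => /cat_eq_cat [[m' [Eu /wpow_prefix [j [t [c [Em' Ep']]]]]]|[m' [Em Eb]]].
- exists j, m, t; rewrite Eu Em' catA; split => //.
    by apply: (@short_factor_head _ _ a _ [::]); rewrite cats0.
  exact: (@short_factor_head _ _ [::] _ c).
- exists 0, u, [::]; rewrite /= cats0; split => //; last by left.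
  by apply: (@short_factor_head _ _ a _ m'); rewrite Ep Em.
Qed.

Lemma star_prod_prefix (ps : seq word) (w : word) : in_star_prod ps w -> forall u b, w = u ++ b ->
  exists ks t, [/\ short_factor ps t, size ks = size ps & u = blocks ps ks ++ t].
Proof.
elim: ps w => [|p ps IH] w /=.
  by move=> -> [|??] // b _; exists [::], [::]; split => //; left.
move=> [k [v [-> Hv]]] u b /esym /cat_eq_cat [[m [E Eb]]|[m [Eu Ev]]].
- have [j [t [c [Eu Ep]]]] := wpow_prefix E.
  exists (j :: nseq (size ps) 0), t; split.
  + exact: (@short_factor_head _ _ [::] _ c).
  + by rewrite /= size_nseq.
  + by rewrite /= blocks_zero Eu cats0.
- have [ks [t [ht hs E]]] := IH _ Hv m b Ev.
  exists (k :: ks), t; split; first exact: short_factor_cons.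
  + by rewrite /= hs.
  + by rewrite /= Eu E catA.
Qed.

Lemma star_prod_factor (ps : seq word) (w : word) : in_star_prod ps w -> forall a u b, w = a ++ u ++ b ->
  exists s t ks, [/\ short_factor ps s, short_factor ps t, size ks = size ps &
    u = s ++ blocks ps ks ++ t].
Proof.
elim: ps w => [|p ps IH] w /=.
  move=> -> [|??] // [|??] // b _.
  by exists [::], [::], [::]; split => //; left.
move=> [k [v [-> Hv]]] a u b /esym /cat_eq_cat [[m [E Eb]]|[m [Ea Ev]]].
- move/esym: Eb => /cat_eq_cat [[m' [Eu Ev]]|[m' [Em Eb]]].
  + have [j [s [d [Em Ep]]]] := wpow_suffix E.
    have [ks [t [ht hk E']]] := star_prod_prefix Hv Ev.
    exists s, t, (j :: ks); split.
    * by apply: (@short_factor_head _ _ d _ [::]); rewrite cats0.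
    * exact: short_factor_cons.
    * by rewrite /= hk.
    * by rewrite Eu Em E' !catA.
  + have [j [s [t [Eu hs ht]]]] := wpow_infix (etrans E (f_equal _ Em)).
    have lift x : short_factor [:: p] x -> short_factor (p :: ps) x.
      case=> [->|[q [a' [b' [hq Eq]]]]]; first by left.
      by move: hq Eq; rewrite mem_seq1 => /eqP ->; apply: short_factor_head.
    exists s, t, (j :: nseq (size ps) 0); split; try exact: lift.
      by rewrite /= size_nseq.
    by rewrite /= blocks_zero cats0 Eu.
- have [s [t [ks [hs ht hk E]]]] := IH _ Hv _ _ _ Ev.
  exists s, t, (0 :: ks); split; try exact: short_factor_cons.
    by rewrite /= hk.
  by rewrite E.
Qed.

Lemma re_empty u : ~ re_lang (RE_empty Sigma) u.
Proof. by move=> h; inversion h. Qed.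

Lemma re_eps u : re_lang (RE_eps Sigma) u <-> u = [::].
Proof. by split=> [h|->]; [inversion h|exact: rl_eps]. Qed.

Lemma re_char a u : re_lang (RE_char a) u <-> u = [:: a].
Proof. by split=> [h|->]; [inversion h|exact: rl_char]. Qed.

Lemma re_union r s u : re_lang (RE_union r s) u <-> re_lang r u \/ re_lang s u.
Proof.
split=> [h|[h|h]]; [inversion h; by [left|right]|exact: rl_unionl|exact: rl_unionr].
Qed.

Lemma re_cat r s u : re_lang (RE_cat r s) u <->
  exists u1 u2, [/\ u = u1 ++ u2, re_lang r u1 & re_lang s u2].
Proof.
split=> [h|[u1 [u2 [-> h1 h2]]]]; last exact: rl_cat.
by inversion h; exists u0, v.
Qed.

Lemma star_cat r u v : re_lang (RE_star r) u -> re_lang (RE_star r) v ->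
  re_lang (RE_star r) (u ++ v).
Proof.
move=> hu hv.
suff gen g : re_lang g u -> g = RE_star r -> re_lang (RE_star r) (u ++ v) by exact: gen hu erefl.
elim=> // r0 u1 w hu1 _ _ IHw [Er]; subst r0.
by rewrite -catA; apply: rl_starS => //; apply: IHw.
Qed.

Lemma star_one r u : re_lang r u -> re_lang (RE_star r) u.
Proof. by move=> h; rewrite -[u]cats0; apply: rl_starS => //; apply: rl_star0. Qed.

Lemma star_split r b1 b2 : re_lang (RE_star r) (b1 ++ b2) ->
  (re_lang (RE_star r) b1 /\ re_lang (RE_star r) b2) \/
  exists be1 v1 v2 be2, [/\ b1 = be1 ++ v1, b2 = v2 ++ be2,
     re_lang (RE_star r) be1, re_lang (RE_star r) be2 & re_lang r (v1 ++ v2)].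
Proof.
suff gen g u : re_lang g u -> g = RE_star r -> forall b1 b2, b1 ++ b2 = u ->
  (re_lang (RE_star r) b1 /\ re_lang (RE_star r) b2) \/
  exists be1 v1 v2 be2, [/\ b1 = be1 ++ v1, b2 = v2 ++ be2,
     re_lang (RE_star r) be1, re_lang (RE_star r) be2 & re_lang r (v1 ++ v2)].
  by move=> h; exact: gen h erefl b1 b2 erefl.
clear b1 b2; elim=> // {g u}.
- move=> r0 [<-] [|??] [|??] // _.
  by left; split; apply: rl_star0.
- move=> r0 u w hu _ hw IHw [Er] b1 b2; subst r0.
  move=> /cat_eq_cat [[m [Eu Eb2]]|[m [Eb1 /esym Ew]]].
    right; exists [::], b1, m, w; split => //; [exact: rl_star0|by rewrite -Eu].
  case: (IHw erefl _ _ Ew) => [[h1 h2]|[be1 [v1 [v2 [be2 [E1 E2 h1 h2 h3]]]]]].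
    by left; split => //; rewrite Eb1; apply: rl_starS.
  right; exists (u ++ be1), v1, v2, be2; split => //.
    by rewrite Eb1 E1 catA.
  exact: rl_starS.
Qed.

(* A recognizer of K: a morphism from words into a finite "monoid" (only the
   multiplicativity of the morphism is needed) with an accepting set whose
   preimage is K. *)
Record recognizer (K : word -> Prop) := Recognizer {
  rc_type : finType;
  rc_hom : word -> rc_type;
  rc_op : rc_type -> rc_type -> rc_type;
  rc_acc : pred rc_type;
  rc_homM : forall x y, rc_hom (x ++ y) = rc_op (rc_hom x) (rc_hom y);
  rc_accP : forall u, K u <-> rc_acc (rc_hom u) }.

Definition pset (T : finType) (P : T -> Prop) : {set T} := [set q | `[< P q >]].

Lemma in_pset (T : finType) (P : T -> Prop) (q : T) : q \in pset P <-> P q.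
Proof. by rewrite inE; split => /asboolP. Qed.

Lemma recognizer_empty : recognizer (re_lang (RE_empty Sigma)).
Proof.
apply: (@Recognizer _ bool (fun _ => false) (fun _ _ => false) pred0) => // u.
by split => // /re_empty.
Defined.

Lemma recognizer_eps : recognizer (re_lang (RE_eps Sigma)).
Proof.
apply: (@Recognizer _ bool (fun u => u == [::]) andb id); first by move=> [|??] [|??].
by move=> u; rewrite re_eps; split => [->|/eqP].
Defined.

(* For a letter: None for the empty word, Some b for a nonempty word, with b
   telling whether it is exactly that letter. *)
Lemma recognizer_char a : recognizer (re_lang (RE_char a)).
Proof.
pose h (u : word) : option bool := if u is _ :: _ then Some (u == [:: a]) else None.
pose op (x y : option bool) :=
  match x, y with None, _ => y | _, None => x | _, _ => Some false end.
apply: (@Recognizer _ _ h op (fun t => t == Some true)).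
- move=> [|x u] [|y v] //=; rewrite ?cats0 // /h /op.
  by rewrite eqseq_cons; case: u => [|z u] /=; rewrite andbF.
- move=> u; rewrite re_char; split => [->|]; first by rewrite /h eqxx.
  by case: u => //= x u /eqP [/eqP].
Defined.

Lemma recognizer_union r s : recognizer (re_lang r) -> recognizer (re_lang s) ->
  recognizer (re_lang (RE_union r s)).
Proof.
move=> [T1 h1 op1 acc1 c1 k1] [T2 h2 op2 acc2 c2 k2].
refine (@Recognizer _ (T1 * T2)%type (fun u => (h1 u, h2 u))
  (fun x y : T1 * T2 => (op1 x.1 y.1, op2 x.2 y.2)) (fun t => acc1 t.1 || acc2 t.2) _ _).
- by move=> x y; rewrite c1 c2.
- by move=> u; rewrite re_union k1 k2 /=; split => [[]->|/orP[]]; rewrite ?orbT; auto.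
Defined.

(* Concatenation: besides both images, record the set of pairs of images
   (h1 u1, h2 u2) over all factorisations u = u1 u2. *)
Lemma recognizer_cat r s : recognizer (re_lang r) -> recognizer (re_lang s) ->
  recognizer (re_lang (RE_cat r s)).
Proof.
move=> [T1 h1 op1 acc1 c1 k1] [T2 h2 op2 acc2 c2 k2].
pose S (u : word) := pset (fun q : T1 * T2 =>
  exists u1 u2, u = u1 ++ u2 /\ q = (h1 u1, h2 u2)).
pose op (x y : T1 * T2 * {set T1 * T2}) :=
  (op1 x.1.1 y.1.1, op2 x.1.2 y.1.2,
   pset (fun q => (exists q', q' \in x.2 /\ q = (q'.1, op2 q'.2 y.1.2)) \/
                  (exists q', q' \in y.2 /\ q = (op1 x.1.1 q'.1, q'.2)))).
apply: (@Recognizer _ _ (fun u => (h1 u, h2 u, S u)) op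
  (fun t => [exists q in t.2, acc1 q.1 && acc2 q.2])).
- move=> x y; rewrite /op /= c1 c2; congr (_, _, _).
  apply/setP => q; apply/idP/idP => /in_pset H; apply/in_pset.
  + case: H => [u1 [u2 [/cat_eq_cat [[m [E1 E2]]|[m [E1 E2]]] ->]]].
    * right; exists (h1 m, h2 u2); split; last by rewrite E1 c1.
      by apply/in_pset; exists m, u2.
    * left; exists (h1 u1, h2 m); split; last by rewrite E2 c2.
      by apply/in_pset; exists u1, m.
  + case: H => [[q' [/in_pset [u1 [u2 [E ->]]] ->]]|[q' [/in_pset [u1 [u2 [E ->]]] ->]]].
    * by exists u1, (u2 ++ y); rewrite E catA c2.
    * by exists (x ++ u1), u2; rewrite E catA c1.
- move=> u; rewrite re_cat; split.
  + move=> [u1 [u2 [E H1 H2]]]; apply/existsP; exists (h1 u1, h2 u2).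
    rewrite /=; apply/andP; split; first by apply/in_pset; exists u1, u2.
    by apply/andP; split; [apply/k1|apply/k2].
  + move=> /existsP [q /andP [/in_pset [u1 [u2 [E ->]]] /andP [H1 H2]]].
    by exists u1, u2; split => //; [apply/k1|apply/k2].
Defined.

(* Given a recognizer (h1, op1, acc1) of r, a word u is
   described by h1 u, whether u ∈ r^*, and the three sets
     heads u  = { h1 a        | u = a b,   b ∈ r^* },
     tails u  = { h1 c        | u = b c,   b ∈ r^* },
     frames u = { (h1 a, h1 c) | u = a b c, b ∈ r^* };
   the following lemmas compute each of them for x y from the data of x and y. *)
Section StarRecognizer.
Variables (r : regex) (T1 : finType) (h1 : word -> T1) (op1 : T1 -> T1 -> T1).
Variable acc1 : pred T1.
Hypothesis h1M : forall x y, h1 (x ++ y) = op1 (h1 x) (h1 y).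
Hypothesis acc1P : forall u, re_lang r u <-> acc1 (h1 u).
Local Notation star := (re_lang (RE_star r)).

Definition heads u := pset (fun s => exists a b, [/\ u = a ++ b, star b & s = h1 a]).
Definition tails u := pset (fun t => exists b c, [/\ u = b ++ c, star b & t = h1 c]).
Definition frames u := pset (fun q : T1 * T1 =>
  exists a b c, [/\ u = a ++ b ++ c, star b & q = (h1 a, h1 c)]).

Lemma acc_cat c a : acc1 (op1 (h1 c) (h1 a)) <-> re_lang r (c ++ a).
Proof. by rewrite acc1P h1M. Qed.

(* The r-factor straddling a cut glues a tail of x to a head of y. *)
Lemma star_glue b c a b' : star b -> star b' -> re_lang r (c ++ a) ->
  star (b ++ (c ++ a) ++ b').
Proof. by move=> hb hb' hr; apply: star_cat => //; apply: star_cat => //; apply: star_one. Qed.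

Lemma star_catE x y : star (x ++ y) <-> (star x /\ star y) \/
  exists t t', [/\ t \in tails x, t' \in heads y & acc1 (op1 t t')].
Proof.
split.
- move/star_split => [H|[be1 [v1 [v2 [be2 [E1 E2 H1 H2 H3]]]]]]; first by left.
  right; exists (h1 v1), (h1 v2); split; last exact/acc_cat.
    by apply/in_pset; exists be1, v1.
  by apply/in_pset; exists v2, be2.
- case=> [[H1 H2]|[t [t' [/in_pset [b [c [Ex Hb ->]]] /in_pset [a' [b' [Ey Hb' ->]]] /acc_cat Hr]]]].
    exact: star_cat.
  by rewrite Ex Ey -catA (catA c); apply: star_glue.
Qed.

Lemma heads_cat x y s : s \in heads (x ++ y) <->
  (exists s', s' \in heads y /\ s = op1 (h1 x) s') \/ (s \in heads x /\ star y) \/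
  (exists t t', [/\ (s, t) \in frames x, t' \in heads y & acc1 (op1 t t')]).
Proof.
split.
- move=> /in_pset [a [b [/cat_eq_cat [[m [E1 E2]]|[m [E1 E2]]] Hb ->]]].
    by left; exists (h1 m); split; [apply/in_pset; exists m, b|rewrite E1 h1M].
  move: Hb; rewrite E2 => /star_split [[Hm Hy]|[be1 [v1 [v2 [be2 [F1 F2 H1 H2 H3]]]]]].
    by right; left; split => //; apply/in_pset; exists a, m; rewrite E1.
  right; right; exists (h1 v1), (h1 v2); split; last exact/acc_cat.
    by apply/in_pset; exists a, be1, v1; rewrite E1 F1.
  by apply/in_pset; exists v2, be2.
- case=> [[s' [/in_pset [a [b [E Hb ->]]] ->]]|[[/in_pset [a [b [E Hb ->]]] Hy]|]].
  + by apply/in_pset; exists (x ++ a), b; rewrite E catA h1M.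
  + by apply/in_pset; exists a, (b ++ y); rewrite E -catA; split => //; apply: star_cat.
  + move=> [t [t' [/in_pset [a [b [c [E Hb [-> ->]]]]] /in_pset [a' [b' [E' Hb' ->]]] /acc_cat Hr]]].
    apply/in_pset; exists a, (b ++ (c ++ a') ++ b'); split => //; last exact: star_glue.
    by rewrite E E' -!catA.
Qed.

Lemma tails_cat x y t : t \in tails (x ++ y) <->
  (exists t', t' \in tails x /\ t = op1 t' (h1 y)) \/ (t \in tails y /\ star x) \/
  (exists t0 s', [/\ t0 \in tails x, (s', t) \in frames y & acc1 (op1 t0 s')]).
Proof.
split.
- move=> /in_pset [b [c [/cat_eq_cat [[m [E1 E2]]|[m [E1 E2]]] Hb ->]]].
    move: Hb; rewrite E1 => /star_split [[Hx Hm]|[be1 [v1 [v2 [be2 [F1 F2 H1 H2 H3]]]]]].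
      by right; left; split => //; apply/in_pset; exists m, c.
    right; right; exists (h1 v1), (h1 v2); split; last exact/acc_cat.
      by apply/in_pset; exists be1, v1.
    by apply/in_pset; exists v2, be2, c; rewrite E2 F2 catA.
  by left; exists (h1 m); split; [apply/in_pset; exists b, m|rewrite E2 h1M].
- case=> [[t' [/in_pset [b [c [E Hb ->]]] ->]]|[[/in_pset [b [c [E Hb ->]]] Hx]|]].
  + by apply/in_pset; exists b, (c ++ y); rewrite E -catA h1M.
  + by apply/in_pset; exists (x ++ b), c; rewrite E catA; split => //; apply: star_cat.
  + move=> [t0 [s' [/in_pset [b [c0 [E Hb ->]]] /in_pset [a' [b' [c [E' Hb' [-> ->]]]]] /acc_cat Hr]]].
    apply/in_pset; exists (b ++ (c0 ++ a') ++ b'), c; split => //; last exact: star_glue.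
    by rewrite E E' -!catA.
Qed.

Lemma frames_cat x y s t : (s, t) \in frames (x ++ y) <->
  (exists q', q' \in frames x /\ (s, t) = (q'.1, op1 q'.2 (h1 y))) \/
  (exists q', q' \in frames y /\ (s, t) = (op1 (h1 x) q'.1, q'.2)) \/
  (s \in heads x /\ t \in tails y) \/
  (exists t0 s', [/\ (s, t0) \in frames x, (s', t) \in frames y & acc1 (op1 t0 s')]).
Proof.
split.
- move=> /in_pset [a [b [c [/esym /cat3_eq_cat H Hb E]]]].
  case: H => [[cc [Ex Ec]]|[[a2 [Ea Ey]]|[b1 [b2 [Ex Eb Ey]]]]].
  + left; exists (h1 a, h1 cc); split; first by apply/in_pset; exists a, b, cc.
    by rewrite E Ec h1M.
  + right; left; exists (h1 a2, h1 c); split; first by apply/in_pset; exists a2, b, c.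
    by rewrite E Ea h1M.
  + case: E => -> ->; move: Hb; rewrite Eb.
    case/star_split => [[H1 H2]|[be1 [v1 [v2 [be2 [F1 F2 H1 H2 H3]]]]]].
      by right; right; left; split; apply/in_pset; [exists a, b1|exists b2, c].
    right; right; right; exists (h1 v1), (h1 v2); split; last exact/acc_cat.
      by apply/in_pset; exists a, be1, v1; rewrite Ex F1.
    by apply/in_pset; exists v2, be2, c; rewrite Ey F2 catA.
- case=> [[q' [/in_pset [a [b [c [E Hb ->]]]] [-> ->]]]|
         [[q' [/in_pset [a [b [c [E Hb ->]]]] [-> ->]]]|
         [[/in_pset [a [b [E Hb ->]]] /in_pset [b' [c [E' Hb' ->]]]]|]]].
  + by apply/in_pset; exists a, b, (c ++ y); rewrite E -!catA h1M.
  + by apply/in_pset; exists (x ++ a), b, c; rewrite E !catA h1M.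
  + by apply/in_pset; exists a, (b ++ b'), c; rewrite E E' -!catA; split => //; apply: star_cat.
  + move=> [t0 [s' [/in_pset [a [b [c0 [E Hb [-> ->]]]]] /in_pset [a' [b' [c [E' Hb' [-> ->]]]]] /acc_cat Hr]]].
    apply/in_pset; exists a, (b ++ (c0 ++ a') ++ b'), c; split => //; last exact: star_glue.
    by rewrite E E' -!catA.
Qed.
End StarRecognizer.

Lemma recognizer_star r : recognizer (re_lang r) -> recognizer (re_lang (RE_star r)).
Proof.
move=> [T1 h1 op1 acc1 h1M acc1P].
pose T := (T1 * bool * {set T1} * {set T1} * {set T1 * T1})%type.
pose h (u : word) : T :=
  (h1 u, `[< re_lang (RE_star r) u >], heads r h1 u, tails r h1 u, frames r h1 u).
pose op (X Y : T) : T :=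
  let: (hx, ax, Hx, Tx, Fx) := X in let: (hy, ay, Hy, Ty, Fy) := Y in
  (op1 hx hy,
   `[< (ax /\ ay) \/ exists t t', [/\ t \in Tx, t' \in Hy & acc1 (op1 t t')] >],
   pset (fun s => (exists s', s' \in Hy /\ s = op1 hx s') \/ (s \in Hx /\ ay) \/
      (exists t t', [/\ (s, t) \in Fx, t' \in Hy & acc1 (op1 t t')])),
   pset (fun t => (exists t', t' \in Tx /\ t = op1 t' hy) \/ (t \in Ty /\ ax) \/
      (exists t0 s', [/\ t0 \in Tx, (s', t) \in Fy & acc1 (op1 t0 s')])),
   pset (fun q => (exists q', q' \in Fx /\ q = (q'.1, op1 q'.2 hy)) \/
      (exists q', q' \in Fy /\ q = (op1 hx q'.1, q'.2)) \/
      (q.1 \in Hx /\ q.2 \in Ty) \/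
      (exists t0 s', [/\ (q.1, t0) \in Fx, (s', q.2) \in Fy & acc1 (op1 t0 s')]))).
refine (@Recognizer _ _ h op (fun t => t.1.1.1.2) _ _); last first.
  by move=> u; rewrite /h /=; split => /asboolP.
move=> x y; rewrite /h /op h1M; congr (_, _, _, _, _).
- apply/asboolP/asboolP; rewrite (star_catE h1M acc1P).
  + by case=> [[??]|]; [left; split; apply/asboolP|right].
  + by case=> [[/asboolP ? /asboolP ?]|]; auto.
- apply/setP => s; apply/idP/idP => [/(heads_cat h1M acc1P) H|/in_pset H];
    [apply/in_pset|apply/(heads_cat h1M acc1P)]; move: H.
  + by case=> [|[[? /asboolP ?]|]]; auto.
  + by case=> [|[[? /asboolP ?]|]]; auto.
- apply/setP => t; apply/idP/idP => [/(tails_cat h1M acc1P) H|/in_pset H];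
    [apply/in_pset|apply/(tails_cat h1M acc1P)]; move: H.
  + by case=> [|[[? /asboolP ?]|]]; auto.
  + by case=> [|[[? /asboolP ?]|]]; auto.
- apply/setP => -[s t]; apply/idP/idP => [/(frames_cat h1M acc1P) H|/in_pset H].
    by apply/in_pset.
  exact/(frames_cat h1M acc1P).
Qed.

Lemma regex_recognizer g : recognizer (re_lang g).
Proof.
elim: g => [|||r Hr s Hs|r Hr s Hs|r Hr].
- exact: recognizer_empty.
- exact: recognizer_eps.
- exact: recognizer_char.
- exact: recognizer_union.
- exact: recognizer_cat.
- exact: recognizer_star.
Qed.

Lemma iter_eventually_periodic (T : finType) (f : T -> T) (e : T) :
  exists N M, 0 < M /\ forall k, N <= k -> iter (k + M) f e = iter k f e.
Proof.
pose g (i : 'I_(#|T|.+1)) := iter i f e.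
have [i [j [hne hij]]] : exists i j, i <> j /\ g i = g j.
  apply: NNPP => hn; have ginj : injective g.
    by move=> i j E; apply: NNPP => hne; apply: hn; exists i, j.
  by move: (leq_card _ ginj); rewrite card_ord ltnn.
have key a b : a < b -> iter a f e = iter b f e ->
   exists N M, 0 < M /\ forall k, N <= k -> iter (k + M) f e = iter k f e.
  move=> hab E; exists a, (b - a); split; first by rewrite subn_gt0.
  move=> k hk; have -> : k + (b - a) = (k - a) + b by lia.
  by rewrite iterD -E -iterD subnK.
case: (ltngtP i j) => h; [exact: key h hij|exact: key h (esym hij)|].
by case: hne; apply: val_inj.
Qed.

Lemma recognizer_periodic K (R : recognizer K) (ps : seq word) :
  exists N M, 0 < M /\ forall p, p \in ps -> forall k q, N <= k ->
    rc_hom R (wpow p (k + M * q)) = rc_hom R (wpow p k).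
Proof.
elim: ps => [|p ps [N2 [M2 [hM2 H2]]]]; first by exists 0, 1.
have Epow k : rc_hom R (wpow p k) = iter k (rc_op (rc_hom R p)) (rc_hom R [::]).
  by elim: k => //= k IH; rewrite wpowS rc_homM IH.
have [N1 [M1 [hM1 H1]]] := iter_eventually_periodic (rc_op (rc_hom R p)) (rc_hom R [::]).
exists (maxn N1 N2), (M1 * M2); split; first by rewrite muln_gt0 hM1.
have H1q k q : N1 <= k -> iter (k + M1 * q) (rc_op (rc_hom R p)) (rc_hom R [::]) =
    iter k (rc_op (rc_hom R p)) (rc_hom R [::]).
  move=> hk; elim: q => [|q IH]; first by rewrite muln0 addn0.
  by rewrite mulnS addnCA addnC H1 ?IH //; lia.
move=> p'; rewrite in_cons => /orP [/eqP -> | hp] k q hk.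
  by rewrite -mulnA !Epow H1q //; lia.
by rewrite (mulnC M1) -mulnA H2 //; lia.
Qed.

(* Each gadget is a formula with one designated free variable,
   using variables >= n as fresh bound variables; its specification says what
   it expresses about the value of the designated variable, provided that
   value is a factor of w. *)
Local Notation V n := (TVar Sigma n).
Local Notation Eps := (TEps Sigma).
Implicit Types (sg : nat -> word) (w : word).

Lemma upd_same sg n u : upd sg n u n = u.
Proof. by rewrite /upd eqxx. Qed.

Lemma upd_other sg n u m : m != n -> upd sg n u m = sg m.
Proof. by rewrite /upd => /negbTE ->. Qed.

Local Ltac simpl_upd := repeat (first [rewrite upd_same | rewrite upd_other; [|by lia]]).
Local Ltac side := try solve [done | lia].

Lemma sat_cat_vars w sg x y z : sat w sg (FEq (V x) (V y) (V z)) <->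
  [/\ infix (sg x) w, infix (sg y) w, infix (sg z) w & sg x = sg y ++ sg z].
Proof.
split; first by move=> [X [Y [Z [[<-] [<-] [<-] [h1 h2 h3 h4]]]]].
by move=> [h1 h2 h3 h4]; exists (sg x), (sg y), (sg z).
Qed.

Lemma sat_eps_var w sg y : sat w sg (FEq (V y) Eps Eps) <-> sg y = [::].
Proof.
split; first by move=> [X [Y [Z [[<-] [<-] [<-] [_ _ _ ->]]]]].
by move=> h; exists [::], [::], [::]; rewrite /= h; split => //; split => //; apply: infix0s.
Qed.

Lemma sat_factor_var w sg x : sat w sg (FEq (V x) (V x) Eps) <-> infix (sg x) w.
Proof.
split; first by move=> [X [Y [Z [[<-] _ _ [h1 _ _ _]]]]].
move=> h; exists (sg x), (sg x), [::]; split => //.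
by split => //; [apply: infix0s|rewrite cats0].
Qed.

Lemma sat_or w sg P Q : sat w sg (FOr P Q) <-> sat w sg P \/ sat w sg Q.
Proof. by []. Qed.

Lemma sat_ex_and w sg n P Q : sat w sg (FEx n (FAnd P Q)) <->
  exists u, [/\ infix u w, sat w (upd sg n u) P & sat w (upd sg n u) Q].
Proof. by split=> [[u [? []]]|[u []]]; exists u. Qed.

Lemma sat_true w sg : sat w sg (FEq Eps Eps Eps).
Proof. by exists [::], [::], [::]; split => //; split => //; apply: infix0s. Qed.

Lemma sat_letter_cons w sg y a n : sat w sg (FEq (V y) (TLet a) (V n)) <->
  infix (sg y) w /\ sg y = a :: sg n.
Proof.
split.
- move=> [X [Y [Z [E1 E2 E3 [h1 _ _ h4]]]]]; move: E1 E2 E3 h1 h4 => /= [<-].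
  by case: ifP => // _ [<-] [<-].
- move=> [h1 h2]; exists (sg y), [:: a], (sg n).
  have ha : a \in w by apply: (mem_infix h1); rewrite h2 mem_head.
  rewrite /= ha; split => //; split => //.
  + by apply: (catr_infix (s := sg n)); rewrite /= -h2.
  + by apply: (catl_infix (s := [:: a])); rewrite /= -h2.
Qed.

Fixpoint FWord (y : nat) (c : word) (n : nat) : formula :=
  match c with
  | [::] => FEq (V y) Eps Eps
  | a :: c' => FEx n (FAnd (FEq (V y) (TLet a) (V n)) (FWord n c' n.+1))
  end.

Lemma sat_FWord w c y n sg : y < n -> infix (sg y) w ->
  (sat w sg (FWord y c n) <-> sg y = c).
Proof.
elim: c y n sg => [|a c IH] y n sg hy hw /=; first exact: sat_eps_var.
split.
- move=> [u [hu [/sat_letter_cons [_ +] H]]]; simpl_upd => ->.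
  by move: H; rewrite IH ?upd_same // => ->.
- move=> H; have hc : infix c w.
    by apply: (catl_infix (s := [:: a])); rewrite /= -H.
  exists c; split => //; split; first by apply/sat_letter_cons; simpl_upd.
  by rewrite IH ?upd_same.
Qed.

Definition FCat (x n : nat) (P Q : formula) : formula :=
  FEx n (FEx n.+1 (FAnd (FEq (V x) (V n) (V n.+1)) (FAnd P Q))).
Arguments FCat : simpl never.

Definition upd2 sg n u v := upd (upd sg n u) n.+1 v.

Lemma sat_FCat w sg x n P Q : x < n -> infix (sg x) w ->
  sat w sg (FCat x n P Q) <->
  exists u v, [/\ sg x = u ++ v, sat w (upd2 sg n u v) P & sat w (upd2 sg n u v) Q].
Proof.
move=> hx hw; rewrite /FCat; split.
  move=> [u [_ [v [_ [/sat_cat_vars [_ _ _] + [HP HQ]]]]]].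
  by rewrite /upd2; simpl_upd => Ex; exists u, v.
move=> [u [v [Ex HP HQ]]]; have [hu hv] : infix u w /\ infix v w.
  by apply: infix_cat; rewrite -Ex.
exists u; split => //; exists v; split => //; split => //.
by apply/sat_cat_vars; simpl_upd.
Qed.

Lemma sat_FCat_spec w sg x n P Q (RP RQ : word -> Prop) : x < n -> infix (sg x) w ->
  (forall sg', infix (sg' n) w -> (sat w sg' P <-> RP (sg' n))) ->
  (forall sg', infix (sg' n.+1) w -> (sat w sg' Q <-> RQ (sg' n.+1))) ->
  (sat w sg (FCat x n P Q) <-> exists u v, [/\ sg x = u ++ v, RP u & RQ v]).
Proof.
move=> hx hw hP hQ; rewrite sat_FCat //.
have upd2n u v : upd2 sg n u v n = u by rewrite /upd2; simpl_upd.
have upd2Sn u v : upd2 sg n u v n.+1 = v by rewrite /upd2; simpl_upd.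
split=> -[u [v [Ex HP HQ]]]; exists u, v;
  (have [hu hv] : infix u w /\ infix v w by apply: infix_cat; rewrite -Ex); split => //.
- by move: HP; rewrite hP; rewrite upd2n.
- by move: HQ; rewrite hQ; rewrite upd2Sn.
- by rewrite hP; rewrite upd2n.
- by rewrite hQ; rewrite upd2Sn.
Qed.

(* z ∈ p^*, for p primitive: z is empty or z = p v = v p. *)
Definition FPrimStar (z : nat) (p : word) (n : nat) : formula :=
  FOr (FEq (V z) Eps Eps) (FCat z n (FWord n p n.+2) (FEq (V z) (V n.+1) (V n))).

Lemma sat_FPrimStar w z p n sg : z < n -> primitive p -> infix (sg z) w ->
  (sat w sg (FPrimStar z p n) <-> exists j, sg z = wpow p j).
Proof.
move=> hz hp hw; rewrite /FPrimStar sat_or sat_FCat // sat_eps_var.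
split.
- case=> [->|[u [v [Ez Hu /sat_cat_vars [_ _ _]]]]]; first by exists 0.
  have hu : infix u w by apply: (catr_infix (s := v)); rewrite -Ez.
  move: Hu; rewrite /upd2 sat_FWord; simpl_upd => // Eu Ez'.
  have [j Ev] : exists j, v = wpow p j by apply: primitive_commute; rewrite -Eu; congruence.
  by exists j.+1; rewrite Ez Eu Ev.
- move=> [[|j] Ej]; [by left|right].
  have hj : infix (wpow p j) w.
    by apply: (catl_infix (s := p)); rewrite -wpowS -Ej.
  have hp' : infix p w.
    by apply: (catr_infix (s := wpow p j)); rewrite -wpowS -Ej.
  exists p, (wpow p j); split => //; rewrite /upd2.
    by rewrite sat_FWord; simpl_upd; side.
  by apply/sat_cat_vars; simpl_upd; split => //; rewrite Ej wpowSr.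
Qed.

Fixpoint FRepeat (v z M n : nat) : formula :=
  match M with
  | 0 => FEq (V v) Eps Eps
  | M'.+1 => FEx n (FAnd (FEq (V v) (V z) (V n)) (FRepeat n z M' n.+1))
  end.

Lemma sat_FRepeat w M v z n sg : v < n -> z < n -> infix (sg v) w ->
  infix (sg z) w -> (sat w sg (FRepeat v z M n) <-> sg v = wpow (sg z) M).
Proof.
elim: M v n sg => [|M IH] v n sg hv hz hwv hwz /=; first exact: sat_eps_var.
split.
- move=> [u [hu [/sat_cat_vars [_ _ _] + H]]]; simpl_upd => ->.
  by move: H; rewrite IH; simpl_upd; side; move=> ->.
- move=> Ev; have hu : infix (wpow (sg z) M) w.
    by apply: (catl_infix (s := sg z)); rewrite -wpowS -Ev.
  exists (wpow (sg z) M); split => //; split; first by apply/sat_cat_vars; simpl_upd.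
  by rewrite IH; simpl_upd; side.
Qed.

Definition FPowMult (v : nat) (p : word) (M n : nat) : formula :=
  FEx n (FAnd (FRepeat v n M n.+1) (FPrimStar n p n.+1)).

Lemma sat_FPowMult w v p M n sg : v < n -> primitive p -> infix (sg v) w ->
  (sat w sg (FPowMult v p M n) <-> exists q, sg v = wpow p (M * q)).
Proof.
move=> hv hp hw; rewrite /FPowMult sat_ex_and; split.
- move=> [u [hu]]; rewrite sat_FRepeat ?sat_FPrimStar; simpl_upd; side.
  by move=> -> [j ->]; exists j; rewrite wpowM mulnC.
- case: M => [|M] [q Eq].
    have h0 : infix [::] w := infix0s w.
    exists [::]; split => //; [rewrite sat_FRepeat|rewrite sat_FPrimStar]; simpl_upd; side.
    by exists 0.
  have hu : infix (wpow p q) w.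
    by apply: (catr_infix (s := wpow (wpow p q) M)); rewrite -wpowS wpowM mulnC -Eq.
  exists (wpow p q); split => //; [rewrite sat_FRepeat|rewrite sat_FPrimStar]; simpl_upd; side.
  - by rewrite Eq wpowM mulnC.
  - by exists q.
Qed.

(* The residue classes {r + M q | q ∈ N} of exponents (M = 0 gives {r}). *)
Definition in_cls (cl : nat * nat) (k : nat) : Prop := exists q, k = cl.1 + cl.2 * q.

Definition FClass (y : nat) (p : word) (cl : nat * nat) (n : nat) : formula :=
  FCat y n (FWord n (wpow p cl.1) n.+2) (FPowMult n.+1 p cl.2 n.+2).

Lemma sat_FClass w y p cl n sg : y < n -> primitive p -> infix (sg y) w ->
  (sat w sg (FClass y p cl n) <-> exists k, in_cls cl k /\ sg y = wpow p k).
Proof.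
move=> hy hp hw; rewrite (sat_FCat_spec (RP := eq^~ (wpow p cl.1))
  (RQ := fun v => exists q, v = wpow p (cl.2 * q))) //; first last.
- by move=> sg' h; apply: sat_FPowMult.
- by move=> sg' h; apply: sat_FWord.
split.
  by move=> [u [v [-> -> [q ->]]]]; exists (cl.1 + cl.2 * q); rewrite wpowD; split => //; exists q.
by move=> [k [[q ->] ->]]; exists (wpow p cl.1), (wpow p (cl.2 * q)); rewrite wpowD; split => //; exists q.
Qed.

Fixpoint blocks_match (pcs : seq (word * (nat * nat))) (u t : word) : Prop :=
  match pcs with
  | [::] => u = t
  | (p, cl) :: pcs' => exists k u', [/\ in_cls cl k, u = wpow p k ++ u' & blocks_match pcs' u' t]
  end.

Fixpoint FBlocks (b : nat) (pcs : seq (word * (nat * nat))) (t : word) (n : nat) : formula :=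
  match pcs with
  | [::] => FWord b t n
  | (p, cl) :: pcs' => FCat b n (FClass n p cl n.+2) (FBlocks n.+1 pcs' t n.+2)
  end.

Lemma sat_FBlocks w t pcs b n sg : b < n ->
  (forall pc, pc \in pcs -> primitive pc.1) -> infix (sg b) w ->
  (sat w sg (FBlocks b pcs t n) <-> blocks_match pcs (sg b) t).
Proof.
elim: pcs b n sg => [|[p cl] pcs IH] b n sg hb hp hw; first exact: sat_FWord.
have hp0 : primitive p by apply: (hp (p, cl)); rewrite mem_head.
have hps pc : pc \in pcs -> primitive pc.1 by move=> h; apply: hp; rewrite in_cons h orbT.
rewrite [FBlocks _ _ _ _]/= (sat_FCat_spec (RP := fun u => exists k, in_cls cl k /\ u = wpow p k)
  (RQ := fun u => blocks_match pcs u t)) //; first last.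
- by move=> sg' h; apply: IH.
- by move=> sg' h; apply: sat_FClass.
split; first by move=> [u [v [-> [k [hk ->]] Hm]]]; exists k, v.
by move=> [k [u' [hk -> Hm]]]; exists (wpow p k), u'; split => //; exists k.
Qed.

(* A shape (s, [(p_i, K_i)], t) describes the words s p_1^{K_1} ... p_m^{K_m} t. *)
Local Notation shape := (word * seq (word * (nat * nat)) * word)%type.

Definition shape_match (u : word) (sh : shape) :=
  exists m, u = sh.1.1 ++ m /\ blocks_match sh.1.2 m sh.2.

Definition FShape (x : nat) (sh : shape) (n : nat) : formula :=
  FCat x n (FWord n sh.1.1 n.+2) (FBlocks n.+1 sh.1.2 sh.2 n.+2).

Lemma sat_FShape w x sh n sg : x < n -> (forall pc, pc \in sh.1.2 -> primitive pc.1) ->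
  infix (sg x) w -> (sat w sg (FShape x sh n) <-> shape_match (sg x) sh).
Proof.
move=> hx hp hw; rewrite (sat_FCat_spec (RP := eq^~ sh.1.1)
  (RQ := fun u => blocks_match sh.1.2 u sh.2)) //; first last.
- by move=> sg' h; apply: sat_FBlocks.
- by move=> sg' h; apply: sat_FWord.
by split=> [[u [m [-> -> Hm]]]|[m [-> Hm]]]; [exists m|exists sh.1.1, m].
Qed.

(* W is the whole word: every factor of w is a factor of W. *)
Definition FWhole (W n : nat) : formula :=
  FAll n (FEx n.+1 (FEx n.+2 (FEx n.+3 (FAnd (FEq (V n.+3) (V n.+1) (V n))
     (FEq (V W) (V n.+3) (V n.+2)))))).

Lemma sat_FWhole w W n sg : W < n -> infix (sg W) w ->
  (sat w sg (FWhole W n) <-> sg W = w).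
Proof.
move=> hW hw; split.
- move=> /(_ w (infix_refl w)) [a [_ [b [_ [c [_ []]]]]]].
  move=> /sat_cat_vars [_ _ _ +] /sat_cat_vars [_ _ _ +]; simpl_upd => -> EW.
  have hs := size_infix hw; rewrite EW !size_cat in hs.
  move: hs; rewrite addnAC -[leqRHS]add0n leq_add2r leqn0 addn_eq0 !size_eq0.
  by case/andP => /eqP ha /eqP hb; rewrite EW ha hb cats0.
- move=> EW y /infixP [a [b Ew]].
  have ha : infix a w by rewrite Ew; apply: prefix_infix.
  have hb : infix b w by rewrite Ew catA; apply: suffix_infix.
  have hay : infix (a ++ y) w by rewrite Ew catA; apply: prefix_infix.
  have hy : infix y w by rewrite Ew; apply: infix_infix.
  exists a; split => //; exists b; split => //; exists (a ++ y); split => //.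
  by split; apply/sat_cat_vars; simpl_upd; split => //; rewrite EW Ew catA.
Qed.

Definition fv_within (phi : formula) (ys : seq nat) := {subset fv phi <= ys}.
Implicit Types (ys zs : seq nat).

Lemma fv_within_Ex n phi ys : fv_within phi (n :: ys) -> fv_within (FEx n phi) ys.
Proof.
move=> h m /=; rewrite mem_filter => /andP [hm /h]; rewrite in_cons => /orP [/eqP E|//].
by rewrite E eqxx in hm.
Qed.

Lemma fv_within_All n phi ys : fv_within phi (n :: ys) -> fv_within (FAll n phi) ys.
Proof. exact: fv_within_Ex. Qed.

Lemma fv_within_And phi psi ys :
  fv_within phi ys -> fv_within psi ys -> fv_within (FAnd phi psi) ys.
Proof. by move=> h1 h2 m /=; rewrite mem_cat => /orP [/h1|/h2]. Qed.

Lemma fv_within_Or phi psi ys :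
  fv_within phi ys -> fv_within psi ys -> fv_within (FOr phi psi) ys.
Proof. by move=> h1 h2 m /=; rewrite mem_cat => /orP [/h1|/h2]. Qed.

Lemma fv_within_mono phi ys zs : fv_within phi ys -> {subset ys <= zs} -> fv_within phi zs.
Proof. by move=> h1 h2 m /h1 /h2. Qed.

Lemma fv_within_Eq a b c ys :
  {subset term_fv a <= ys} -> {subset term_fv b <= ys} -> {subset term_fv c <= ys} ->
  fv_within (FEq a b c) ys.
Proof. by move=> h1 h2 h3 m /=; rewrite !mem_cat => /or3P [/h1|/h2|/h3]. Qed.

Lemma term_fv_var n ys : n \in ys -> {subset term_fv (V n) <= ys}.
Proof. by move=> h m; rewrite /= mem_seq1 => /eqP ->. Qed.

Lemma term_fv_eps ys : {subset term_fv Eps <= ys}. Proof. by []. Qed.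

Lemma term_fv_letter (a : Sigma) ys : {subset term_fv (TLet a) <= ys}. Proof. by []. Qed.

Local Ltac fv_tac := repeat first
  [ apply: fv_within_Ex | apply: fv_within_All | apply: fv_within_And
  | apply: fv_within_Or | apply: fv_within_Eq | apply: term_fv_eps
  | apply: term_fv_letter | (apply: term_fv_var; rewrite ?in_cons ?eqxx ?orbT //) ].

Local Ltac fv_weaken lem :=
  eapply fv_within_mono; [apply: lem|by apply/allP; rewrite /= ?in_cons ?eqxx ?orbT].

Lemma fv_within_FCat x n P Q ys : x \in ys ->
  fv_within P (n :: n.+1 :: ys) -> fv_within Q (n :: n.+1 :: ys) ->
  fv_within (FCat x n P Q) ys.
Proof.
move=> hx hP hQ; have swap : {subset n :: n.+1 :: ys <= n.+1 :: n :: ys}.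
  by move=> m; rewrite !in_cons orbCA.
rewrite /FCat; apply/fv_within_Ex/fv_within_Ex/fv_within_And.
  by fv_tac; rewrite hx !orbT.
by apply: fv_within_And; apply: fv_within_mono swap.
Qed.

Lemma fv_FWord y c n : fv_within (FWord y c n) [:: y].
Proof. by elim: c y n => [|a c IH] y n /=; fv_tac; fv_weaken IH. Qed.

Lemma fv_FRepeat v z M n : fv_within (FRepeat v z M n) [:: v; z].
Proof. by elim: M v n => [|M IH] v n /=; fv_tac; fv_weaken IH. Qed.

Lemma fv_FPrimStar z p n : fv_within (FPrimStar z p n) [:: z].
Proof.
rewrite /FPrimStar; apply: fv_within_Or; first by fv_tac.
by apply: fv_within_FCat; [exact: mem_head|fv_weaken fv_FWord|fv_tac].
Qed.

Lemma fv_FPowMult v p M n : fv_within (FPowMult v p M n) [:: v].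
Proof.
by apply/fv_within_Ex/fv_within_And; [fv_weaken fv_FRepeat|fv_weaken fv_FPrimStar].
Qed.

Lemma fv_FClass y p cl n : fv_within (FClass y p cl n) [:: y].
Proof.
by apply: fv_within_FCat; [exact: mem_head|fv_weaken fv_FWord|fv_weaken fv_FPowMult].
Qed.

Lemma fv_FBlocks b pcs t n : fv_within (FBlocks b pcs t n) [:: b].
Proof.
elim: pcs b n => [|[p cl] pcs IH] b n; first exact: fv_FWord.
by apply: fv_within_FCat; [exact: mem_head|fv_weaken fv_FClass|fv_weaken IH].
Qed.

Lemma fv_FShape x sh n : fv_within (FShape x sh n) [:: x].
Proof.
by apply: fv_within_FCat; [exact: mem_head|fv_weaken fv_FWord|fv_weaken fv_FBlocks].
Qed.

Lemma fv_FWhole W n : fv_within (FWhole W n) [:: W].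
Proof. by rewrite /FWhole; fv_tac. Qed.

Lemma FC_FCat x n P Q : is_FC (FCat x n P Q) = is_FC P && is_FC Q.
Proof. by []. Qed.

Lemma FC_FWord y c n : is_FC (FWord y c n).
Proof. by elim: c y n => //= a c IH y n; rewrite IH. Qed.

Lemma FC_FRepeat v z M n : is_FC (FRepeat v z M n).
Proof. by elim: M v n => //= M IH v n; rewrite IH. Qed.

Lemma FC_FPowMult v p M n : is_FC (FPowMult v p M n).
Proof. by rewrite /FPowMult /FPrimStar /FCat /= FC_FRepeat FC_FWord. Qed.

Lemma FC_FBlocks b pcs t n : is_FC (FBlocks b pcs t n).
Proof.
elim: pcs b n => [|[p cl] pcs IH] b n; first exact: FC_FWord.
by rewrite [FBlocks _ _ _ _]/= FC_FCat IH /FClass FC_FCat FC_FWord FC_FPowMult.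
Qed.

Lemma FC_FShape x sh n : is_FC (FShape x sh n).
Proof. by rewrite /FShape FC_FCat FC_FWord FC_FBlocks. Qed.

Definition factors_of (p : word) : seq word :=
  [seq take l (drop i p) | i <- iota 0 (size p).+1, l <- iota 0 (size p).+1].

Definition short_factors (ps : seq word) : seq word :=
  [::] :: flatten [seq factors_of p | p <- ps].

Lemma short_factor_mem ps s : short_factor ps s -> s \in short_factors ps.
Proof.
case=> [->|[p [a [b [hp E]]]]]; first exact: mem_head.
rewrite in_cons; apply/orP; right; apply/flatten_mapP; exists p => //.
have -> : s = take (size s) (drop (size a) p).
  by rewrite E drop_size_cat // take_size_cat.
apply: (allpairs_f (fun i l => take l (drop i p))); rewrite mem_iota /= E !size_cat; lia.
Qed.

Section ExponentClasses.
Variables (N M : nat).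
Hypothesis M_gt0 : 0 < M.

Definition classes : seq (nat * nat) :=
  [seq (k, 0) | k <- iota 0 N] ++ [seq (r, M) | r <- iota N M].

Definition class_of (k : nat) : nat * nat :=
  if k < N then (k, 0) else (N + (k - N) %% M, M).

Lemma class_of_in k : in_cls (class_of k) k.
Proof.
rewrite /class_of /in_cls; case: ltnP => hk /=; first by exists 0; rewrite addn0.
by exists ((k - N) %/ M); have := divn_eq (k - N) M; lia.
Qed.

Lemma class_of_mem k : class_of k \in classes.
Proof.
rewrite /class_of /classes mem_cat; case: ltnP => hk; apply/orP; [left|right];
  apply: map_f; rewrite mem_iota; first lia.
by have := ltn_pmod (k - N) M_gt0; lia.
Qed.

Fixpoint patterns (ps : seq word) : seq (seq (word * (nat * nat))) :=
  match ps with
  | [::] => [:: [::]]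
  | p :: ps' => [seq (p, cl) :: v | cl <- classes, v <- patterns ps']
  end.

Fixpoint pattern_of (ps : seq word) (ks : seq nat) : seq (word * (nat * nat)) :=
  match ps, ks with
  | p :: ps', k :: ks' => (p, class_of k) :: pattern_of ps' ks'
  | _, _ => [::]
  end.

Lemma pattern_of_mem ps ks : size ks = size ps -> pattern_of ps ks \in patterns ps.
Proof.
elim: ps ks => [|p ps IH] [|k ks] //= [hs].
by apply: (allpairs_f (fun cl v => (p, cl) :: v)); [apply: class_of_mem|apply: IH].
Qed.

Lemma pattern_of_match ps ks t : size ks = size ps ->
  blocks_match (pattern_of ps ks) (blocks ps ks ++ t) t.
Proof.
elim: ps ks => [|p ps IH] [|k ks] //= [hs].
by exists k, (blocks ps ks ++ t); split; [exact: class_of_in|rewrite catA|exact: IH].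
Qed.

Lemma patterns_mem ps v : v \in patterns ps ->
  forall pc, pc \in v -> pc.1 \in ps /\ pc.2 \in classes.
Proof.
elim: ps v => [|p ps IH] v /=; first by rewrite mem_seq1 => /eqP -> pc.
move=> /allpairsP [[cl v'] [/= hcl hv' ->]] pc; rewrite in_cons => /orP [/eqP -> //|hpc].
  by rewrite mem_head.
by have [h1 h2] := IH _ hv' _ hpc; rewrite in_cons h1 orbT.
Qed.

Definition shapes (ps : seq word) : seq shape :=
  [seq (sv, t) | sv <- [seq (s, v) | s <- short_factors ps, v <- patterns ps],
                 t <- short_factors ps].

Lemma shapes_patterns ps sh : sh \in shapes ps -> sh.1.2 \in patterns ps.
Proof.
by move=> /allpairsP [[sv t] [/allpairsP [[s v] [_ hv ->]] _ ->]].
Qed.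

Lemma shapes_cover ps w u : in_star_prod ps w -> infix u w ->
  exists2 sh, sh \in shapes ps & shape_match u sh.
Proof.
move=> hw /infixP [a [b Ew]].
have [s [t [ks [hs ht hk Eu]]]] := star_prod_factor hw Ew.
exists (s, pattern_of ps ks, t).
  apply: (allpairs_f (fun sv t => (sv, t))); last exact: short_factor_mem.
  apply: (allpairs_f (fun s v => (s, v))); first exact: short_factor_mem.
  exact: pattern_of_mem.
by exists (blocks ps ks ++ t); split => //; apply: pattern_of_match.
Qed.
End ExponentClasses.

(* The representative word of a block pattern: each p_i raised to the least
   exponent of its class. *)
Definition pattern_rep (v : seq (word * (nat * nat))) : word :=
  flatten [seq wpow pc.1 pc.2.1 | pc <- v].

Definition shape_rep (sh : shape) : word := sh.1.1 ++ pattern_rep sh.1.2 ++ sh.2.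

Lemma recognizer_blocks K (R : recognizer K) v m t :
  (forall pc, pc \in v -> forall k, in_cls pc.2 k ->
     rc_hom R (wpow pc.1 k) = rc_hom R (wpow pc.1 pc.2.1)) ->
  blocks_match v m t -> rc_hom R m = rc_hom R (pattern_rep v ++ t).
Proof.
elim: v m => [|[p cl] v IH] m hv /=; first by move=> ->.
move=> [k [u' [hk -> Hm]]].
rewrite rc_homM (hv (p, cl) (mem_head _ _) k hk) (IH u') //.
  by rewrite -rc_homM /pattern_rep /= catA.
by move=> pc hpc; apply: hv; rewrite in_cons hpc orbT.
Qed.

Lemma recognizer_shape K (R : recognizer K) N M ps :
  (forall p, p \in ps -> forall k q, N <= k ->
     rc_hom R (wpow p (k + M * q)) = rc_hom R (wpow p k)) ->
  forall sh u, sh \in shapes N M ps -> shape_match u sh ->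
  rc_hom R u = rc_hom R (shape_rep sh).
Proof.
move=> Hper sh u hsh [m [-> Hm]]; rewrite rc_homM (recognizer_blocks _ Hm) -?rc_homM //.
move=> [p cl] /(patterns_mem (shapes_patterns hsh)) [/= hp].
rewrite /classes mem_cat => /orP [/mapP [k0 _ ->]|/mapP [r hr ->]] k [q ->] /=.
  by rewrite mul0n addn0.
by apply: Hper => //; move: hr; rewrite mem_iota; lia.
Qed.

Lemma FC_shape_disjunction (x : nat) (Good : shape -> Prop) (l : seq shape) :
  (forall sh, sh \in l -> forall pc, pc \in sh.1.2 -> primitive pc.1) ->
  exists phi : formula, [/\ is_FC phi, fv_within phi [:: x] &
    forall w sg, infix (sg x) w ->
      (sat w sg phi <-> exists2 sh, sh \in l & Good sh /\ shape_match (sg x) sh)].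
Proof.
elim: l => [|sh l IH] hl.
  exists (FNot (FEq Eps Eps Eps)); split => // w sg _.
  by split=> [/(_ (sat_true _ _))|[]].
have [|phi [hFC hfv hsat]] := IH; first by move=> sh' h; apply: hl; rewrite in_cons h orbT.
have hp : forall pc, pc \in sh.1.2 -> primitive pc.1 by apply: hl; rewrite mem_head.
have [hG|hG] := classic (Good sh).
- exists (FOr (FShape x sh x.+1) phi); split.
  + by apply/andP; split; [apply: FC_FShape|].
  + by apply: fv_within_Or => //; apply: fv_FShape.
  + move=> w sg hw; rewrite sat_or sat_FShape // hsat //; split.
      by case=> [hm|[sh' h1 h2]]; [exists sh; rewrite ?mem_head|exists sh'; rewrite ?in_cons ?h1 ?orbT].
    move=> [sh']; rewrite in_cons => /orP [/eqP -> [_ hm]|h1 h2]; first by left.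
    by right; exists sh'.
- exists phi; split => // w sg hw; rewrite hsat //; split.
    by move=> [sh' h1 h2]; exists sh'; rewrite ?in_cons ?h1 ?orbT.
  move=> [sh']; rewrite in_cons => /orP [/eqP -> [//]|h1 h2].
  by exists sh'.
Qed.

(* Elimination of a regular constraint: on words of p_1^* ... p_n^* (p_i
   primitive), x ∈ γ is equivalent to an FC formula with free variable x,
   namely the disjunction of the shapes whose representative is in γ. *)
Lemma regular_constraint_FC (ps : seq word) (g : regex) (x : nat) :
  (forall p, p \in ps -> primitive p) ->
  exists psi : formula, [/\ is_FC psi, fv_within psi [:: x] &
    forall w sg, in_star_prod ps w -> (sat w sg psi <-> sat w sg (FReg x g))].
Proof.
move=> hps; have R := regex_recognizer g.
have [N [M [hM Hper]]] := recognizer_periodic R ps.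
have [phi [hFC hfv hsat]] := FC_shape_disjunction x (fun sh => re_lang g (shape_rep sh)) (l := shapes N M ps)
  (fun sh hs pc hpc => hps _ (proj1 (patterns_mem (shapes_patterns hs) hpc))).
exists (FAnd (FEq (V x) (V x) Eps) phi); split => //.
  by apply: fv_within_And => //; fv_tac.
move=> w sg hw; split.
- move=> [/sat_factor_var hi /(hsat _ _ hi) [sh hsh [hG hm]]]; split => //.
  by rewrite (rc_accP R) (recognizer_shape Hper hsh hm) -rc_accP.
- move=> [hi hg]; split; first exact/sat_factor_var.
  have [sh hsh hm] := shapes_cover N hM hw hi; apply/hsat => //; exists sh => //; split => //.
  by rewrite (rc_accP R) -(recognizer_shape Hper hsh hm) -rc_accP.
Qed.

Lemma FCREG_to_FC (ps : seq word) (phi : formula) :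
  (forall p, p \in ps -> primitive p) ->
  exists phi' : formula, [/\ is_FC phi', fv_within phi' (fv phi) &
    forall w sg, in_star_prod ps w -> (sat w sg phi' <-> sat w sg phi)].
Proof.
move=> hps; elim: phi.
- by move=> a b c; exists (FEq a b c); split.
- by move=> x g; have [psi [? ? ?]] := regular_constraint_FC g x hps; exists psi; split.
- move=> p [p' [h1 h2 h3]]; exists (FNot p'); split => // w sg hw /=.
  by rewrite (h3 _ _ hw).
- move=> p [p' [h1 h2 h3]] q [q' [g1 g2 g3]]; exists (FAnd p' q'); split.
  + by rewrite /= h1 g1.
  + by move=> m /=; rewrite !mem_cat => /orP [/h2 ->|/g2 ->] //; rewrite orbT.
  + by move=> w sg hw /=; rewrite (h3 _ _ hw) (g3 _ _ hw).
- move=> p [p' [h1 h2 h3]] q [q' [g1 g2 g3]]; exists (FOr p' q'); split.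
  + by rewrite /= h1 g1.
  + by move=> m /=; rewrite !mem_cat => /orP [/h2 ->|/g2 ->] //; rewrite orbT.
  + by move=> w sg hw /=; rewrite (h3 _ _ hw) (g3 _ _ hw).
- move=> n p [p' [h1 h2 h3]]; exists (FEx n p'); split => //.
    by move=> m /=; rewrite !mem_filter => /andP [-> /h2].
  by move=> w sg hw /=; split=> -[u [hu H]]; exists u; rewrite (h3 _ _ hw) in H *.
- move=> n p [p' [h1 h2 h3]]; exists (FAll n p'); split => //.
    by move=> m /=; rewrite !mem_filter => /andP [-> /h2].
  by move=> w sg hw /=; split=> H u hu; move: (H u hu); rewrite (h3 _ _ hw).
Qed.

Definition FStarProd (ps : seq word) : formula :=
  FEx 0 (FAnd (FWhole 0 1) (FBlocks 0 [seq (p, (0, 1)) | p <- ps] [::] 1)).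

Lemma blocks_match_star_prod (ps : seq word) (u : word) :
  blocks_match [seq (p, (0, 1)) | p <- ps] u [::] <-> in_star_prod ps u.
Proof.
elim: ps u => [|p ps IH] u //=; split.
  by move=> [k [u' [_ -> /IH H]]]; exists k, u'.
by move=> [k [v [-> /IH H]]]; exists k, v; split => //; exists k; rewrite mul1n.
Qed.

Lemma sat_FStarProd (ps : seq word) w sg : (forall p, p \in ps -> primitive p) ->
  sat w sg (FStarProd ps) <-> in_star_prod ps w.
Proof.
move=> hps; have hp pc : pc \in [seq (p, (0, 1)) | p <- ps] -> primitive pc.1.
  by move=> /mapP [p hp' ->]; apply: hps.
rewrite /FStarProd sat_ex_and -blocks_match_star_prod; split.
- move=> [u [hu]]; rewrite sat_FWhole ?sat_FBlocks ?upd_same //.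
  by move=> ->.
- move=> H; exists w; split; first exact: infix_refl.
    by rewrite sat_FWhole ?upd_same //; exact: infix_refl.
  by rewrite sat_FBlocks ?upd_same //; exact: infix_refl.
Qed.

Lemma FC_FStarProd (ps : seq word) : is_FC (FStarProd ps).
Proof. by rewrite /FStarProd /= FC_FBlocks. Qed.

Lemma fv_FStarProd (ps : seq word) : fv_within (FStarProd ps) [::].
Proof. by apply/fv_within_Ex/fv_within_And; [apply: fv_FWhole|apply: fv_FBlocks]. Qed.

Lemma fv_within_nil_sentence (phi : formula) : fv_within phi [::] -> sentence phi.
Proof.
rewrite /sentence /fv_within; case: (fv phi) => [|m s] // /(_ m).
by rewrite mem_head => /(_ isT).
Qed.

Lemma star_prod_nil (ws : seq word) : in_star_prod ws [::].
Proof. by elim: ws => //= p ws IH; exists 0, [::]. Qed.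

Lemma star_prod_cat (ws1 ws2 : seq word) u v :
  in_star_prod ws1 u -> in_star_prod ws2 v -> in_star_prod (ws1 ++ ws2) (u ++ v).
Proof.
elim: ws1 u => [|p ws IH] u /=; first by move=> ->.
move=> [k [u' [-> H]]] Hv; exists k, (u' ++ v); split; first by rewrite catA.
exact: IH.
Qed.

Lemma star_prod_primitive (ws : seq word) : exists ps,
  (forall p, p \in ps -> primitive p) /\ forall w, in_star_prod ws w -> in_star_prod ps w.
Proof.
elim: ws => [|v ws [ps [hps H]]]; first by exists [::].
have [->|hv] := eqVneq v [::].
  by exists ps; split => // w /= [k [u [-> /H]]]; rewrite -/(wpow [::] k) wpow_nil.
have [q [j [hq Ev]]] := primitive_root (elimN eqP hv).
exists (q :: ps); split; first by move=> p; rewrite in_cons => /orP [/eqP ->|/hps].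
move=> w /= [k [u [-> /H Hu]]]; exists (j * k), u; split => //.
by rewrite -/(wpow v k) -/(wpow q (j * k)) Ev wpowM.
Qed.

Lemma bool_comb_bounded_cases (L : language Sigma) : bool_comb_bounded L ->
  bounded L \/ bounded (fun w => ~ L w).
Proof.
have padl ws1 ws2 w : in_star_prod ws2 w -> in_star_prod (ws1 ++ ws2) w.
  by move=> h; rewrite -[w]cat0s; apply: star_prod_cat => //; apply: star_prod_nil.
have padr ws1 ws2 w : in_star_prod ws1 w -> in_star_prod (ws1 ++ ws2) w.
  by move=> h; rewrite -[w]cats0; apply: star_prod_cat => //; apply: star_prod_nil.
elim => {L}.
- by move=> L h; left.
- move=> L _ [[ws h]|h]; [right|by left].
  by exists ws => w /NNPP /h.
- move=> L1 L2 _ [[w1 h1]|[w1 h1]] _ [[w2 h2]|[w2 h2]].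
  + by left; exists (w1 ++ w2) => w [/h1/padr|/h2/padl].
  + by right; exists w2 => w H; apply: h2 => ?; apply: H; right.
  + by right; exists w1 => w H; apply: h1 => ?; apply: H; left.
  + by right; exists w1 => w H; apply: h1 => ?; apply: H; left.
- move=> L1 L2 _ [[w1 h1]|[w1 h1]] _ [[w2 h2]|[w2 h2]].
  + by left; exists w1 => w [/h1].
  + by left; exists w1 => w [/h1].
  + by left; exists w2 => w [_ /h2].
  + right; exists (w1 ++ w2) => w H.
    have [H1|H1] := classic (L1 w); last by apply/padr/h1.
    by apply/padl/h2 => H2; apply: H.
Qed.

Lemma bounded_FC (L : language Sigma) : bounded L -> FCREG_definable L -> FC_definable L.
Proof.
move=> [ws hws] [phi [hs hL]].
have [ps [hps Hps]] := star_prod_primitive ws.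
have [phi' [hFC hfv hsat]] := FCREG_to_FC phi hps.
exists (FAnd (FStarProd ps) phi'); split.
- apply/fv_within_nil_sentence/fv_within_And; first exact: fv_FStarProd.
  by move: hfv; rewrite /fv_within hs.
- by apply/andP; split; [apply: FC_FStarProd|].
- move=> w; split.
  + move=> Lw; have hw := Hps _ (hws _ Lw).
    by split; [apply/(@sat_FStarProd ps w _ hps)|apply/hsat/hL].
  + by move=> [/(@sat_FStarProd ps w _ hps) hw H]; apply/hL/(hsat _ _ hw).
Qed.

Lemma FC_definable_compl (L : language Sigma) :
  FC_definable L -> FC_definable (fun w => ~ L w).
Proof. by move=> [phi [h1 h2 h3]]; exists (FNot phi); split => // w; rewrite h3. Qed.

Lemma FCREG_definable_compl (L : language Sigma) :
  FCREG_definable L -> FCREG_definable (fun w => ~ L w).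
Proof. by move=> [phi [h1 h2]]; exists (FNot phi); split => // w; rewrite h2. Qed.

End BoundedFC.

Theorem lemma5p3 (Sigma : finType) (L : language Sigma) :
  bool_comb_bounded L -> (FC_definable L <-> FCREG_definable L).
Proof.
move=> hb; split; first by move=> [phi [h1 _ h3]]; exists phi.
move=> hL; case: (bool_comb_bounded_cases hb) => hB; first exact: bounded_FC.
have /(bounded_FC hB)/FC_definable_compl [phi [h1 h2 h3]] := FCREG_definable_compl hL.
by exists phi; split => // w; rewrite -h3; split => [? /(_ _)|/NNPP].
Qed.
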